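(* Let $k'\geq 2$, $h\geq 1$ and $r$ be integers with $1\leq r\leq k'-1$, and let $n'=hk'+r$. Then there exist positive integers $s$ and $k$ such that $C_{sk}^k$ has a minor isomorphic to $C_{n'}^{k'}$ if and only if $r\leq h-1$.
   Context: For integers $n\geq2$, $1\leq k\leq n-1$, $\mathbb{Z}_n=\{0,\dots,n-1\}$ with addition modulo $n$, and $C_n^k$ is the $n\times n$ circulant $0,1$ matrix whose $i$-th row ($i\in\mathbb{Z}_n$) is the incidence vector of $\{i,i+1,\dots,i+k-1\}$ (mod $n$). For a $0,1$ matrix $A$ with columns indexed by $\mathbb{Z}_n$ and $N\subset\mathbb{Z}_n$, the minor $A/N$ (obtained by contraction of $N$) is the submatrix obtained by removing the columns indexed by $N$ and then removing all dominating rows (a row $v$ is dominating if $v\geq u$ for some other row $u\neq v$). ''Minor'' always means a minor obtained by contraction; two matrices are isomorphic if one is obtained from the other by permuting rows and columns. *)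

From mathcomp Require Import all_boot.
Set Implicit Arguments. Unset Strict Implicit. Unset Printing Implicit Defensive.

(* A 0,1 matrix is represented as a clutter-like object: its set of columns
   [mcols] (a subset of a finite index type T) and its set of rows, each row
   being identified with its support (the set of columns where it has a 1).
   Rows are considered as a set, so isomorphism up to row permutation is
   built in. *)
Record mat01 (T : finType) := Mat01 { mcols : {set T}; mrows : {set {set T}} }.

(* C_n^k : columns 'I_n = Z_n, row i = {i, i+1, ..., i+k-1} (mod n). *)
Definition circ_row (n k : nat) (i : 'I_n) : {set 'I_n} :=
  [set j : 'I_n | ((j + n - i) %% n < k)%N].

Definition circulant (n k : nat) : mat01 'I_n :=
  Mat01 [set: 'I_n] [set circ_row k i | i : 'I_n].

Definition contract (T : finType) (A : mat01 T) (N : {set T}) : mat01 T :=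
  let R := [set v :\: N | v in mrows A] in
  Mat01 (mcols A :\: N) [set v in R | [forall u in R, ~~ (u \proper v)]].

Definition mat_iso (T1 T2 : finType) (A : mat01 T1) (B : mat01 T2) : Prop :=
  exists f : T1 -> T2,
    {in mcols A &, injective f} /\ f @: mcols A = mcols B /\
    [set f @: (v : {set T1}) | v in mrows A] = mrows B.

Definition has_minor (T1 T2 : finType) (A : mat01 T1) (B : mat01 T2) : Prop :=
  exists N : {set T1}, N \subset mcols A /\ mat_iso (contract A N) B.

From mathcomp Require Import all_boot zify.
Set Implicit Arguments. Unset Strict Implicit. Unset Printing Implicit Defensive.

(* Suppose C_n^k / N is isomorphic to C_n'^k' and let W_i = C_i \ N be the
   contracted windows. Each W_i contains a row of the minor, so |W_i| >= k', and
   double counting gives sum_i |W_i| = n' k; hence n k' <= n' k. No window has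
   more than k' + 1 elements: otherwise let q, y be its last two elements; among
   the k' rows of the minor through q, which are windows around q distinguished
   by how many of their elements precede q, one ends at q, starts after i, and
   therefore also contains y. As the n' rows of the minor are windows of size
   exactly k', summing gives n' k + n' <= n (k' + 1). For n = s k and
   n' = h k' + r these two inequalities force r < h.
   Conversely, if r < h and m = h k' + r, contracting C_{hm}^m to the multiples
   of h leaves in each window k' or k' + 1 consecutive multiples of h, and every
   block of k' of them occurs; the minimal ones are the rows of C_m^k'. *)

Lemma modn_lt_double m n : m < n + n -> m %% n = if m < n then m else m - n.
Proof.
case: ifP => [lt_mn _|ge_mn lt_m2n]; first by rewrite modn_small.
have -> : m = (m - n) + n by lia.
by rewrite modnDr modn_small; lia.
Qed.

Section Offset.
Variable n : nat.
Implicit Types a b x : 'I_n.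

Definition offset a x : nat := (x + n - a) %% n.

Lemma offsetE a x : offset a x = if x < a then x + n - a else x - a.
Proof.
have := ltn_ord a; have := ltn_ord x => ltx lta.
by rewrite /offset modn_lt_double; [case: ifP; case: ifP; lia | lia].
Qed.

Lemma offset_lt a x : offset a x < n.
Proof. have := ltn_ord a; have := ltn_ord x; rewrite offsetE; case: ifP; lia. Qed.

Lemma offsetxx a : offset a a = 0.
Proof. by rewrite offsetE ltnn subnn. Qed.

Lemma offset_add a b x : offset a x = (offset a b + offset b x) %% n.
Proof.
have := ltn_ord a; have := ltn_ord b; have := ltn_ord x => ltx ltb lta.
rewrite !offsetE modn_lt_double; last by case: ifP; case: ifP; lia.
by case: ifP; case: ifP; case: ifP; case: ifP; lia.
Qed.

Lemma offset_inj a : injective (offset a).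
Proof.
move=> x y; have := ltn_ord a; have := ltn_ord x; have := ltn_ord y.
by rewrite !offsetE => ? ? ?; case: ifP; case: ifP => ? ? ?; apply: ord_inj; lia.
Qed.

Lemma offset_inj_l x : injective (offset^~ x).
Proof.
move=> a b; have := ltn_ord a; have := ltn_ord b; have := ltn_ord x.
by rewrite /= !offsetE => ? ? ?; case: ifP; case: ifP => ? ? ?; apply: ord_inj; lia.
Qed.

Lemma offset_surj a d : d < n -> exists x, offset a x = d.
Proof.
move=> lt_dn; have n_gt0 : 0 < n by lia.
exists (Ordinal (ltn_pmod (a + d) n_gt0)); have lt_an := ltn_ord a.
rewrite offsetE /= modn_lt_double; last lia.
by case: (ltnP (a + d) n) => ? /=; case: ifP; lia.
Qed.

Lemma offset_surj_l x d : d < n -> exists a, offset a x = d.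
Proof.
move=> lt_dn; have n_gt0 : 0 < n by lia.
exists (Ordinal (ltn_pmod (x + n - d) n_gt0)); have lt_xn := ltn_ord x.
rewrite offsetE /= modn_lt_double; last lia.
by case: (ltnP (x + n - d) n) => ? /=; case: ifP; lia.
Qed.

Lemma offset_lt_offset a b x :
  (offset a x < offset a b) = (n - offset a b <= offset b x).
Proof.
have := offset_lt a b; have := offset_lt b x => ? ?.
by rewrite (offset_add a b x) modn_lt_double; [case: ifP; lia | lia].
Qed.

Lemma offset_lt_through k a b x : offset a b < k ->
  (offset a x < k) = (offset b x < k - offset a b) || (n - offset a b <= offset b x).
Proof.
have := offset_lt a b; have := offset_lt b x => ? ? ?.
by rewrite (offset_add a b x) modn_lt_double; [case: ifP; lia | lia].
Qed.

End Offset.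

Lemma mem_circ_row n k (a x : 'I_n) : (x \in circ_row k a) = (offset a x < k).
Proof. by rewrite inE. Qed.

Lemma card_ord_lt n k : k <= n -> #|[set y : 'I_n | y < k]| = k.
Proof.
move=> le_kn; rewrite -sum1_card (eq_bigl (fun i : 'I_n => i < k)) => [|i]; last first.
  by rewrite inE.
by rewrite (big_ord_narrow (F := fun _ => 1) le_kn) sum1_card card_ord.
Qed.

Lemma card_inj_lt n k (phi : 'I_n -> nat) :
  injective phi -> (forall x, phi x < n) -> k <= n -> #|[set x | phi x < k]| = k.
Proof.
move=> phi_inj phi_lt le_kn; pose psi x := Ordinal (phi_lt x).
have psi_inj : injective psi by move=> x y /(congr1 val) /phi_inj.
rewrite -[RHS](card_ord_lt le_kn) -[RHS](card_preimset _ psi_inj).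
by apply: eq_card => x; rewrite !inE.
Qed.

Lemma card_circ_row n k (a : 'I_n) : k <= n -> #|circ_row k a| = k.
Proof.
move=> le_kn; rewrite -[RHS](card_inj_lt (@offset_inj n a) (offset_lt a) le_kn).
by apply: eq_card => x; rewrite !inE.
Qed.

Lemma card_circ_rows_through n k (x : 'I_n) :
  k <= n -> #|[set a | x \in circ_row k a]| = k.
Proof.
move=> le_kn.
rewrite -[RHS](card_inj_lt (@offset_inj_l n x) (fun a => offset_lt a x) le_kn).
by apply: eq_card => a; rewrite !inE.
Qed.

Lemma circ_row_inj n k : 0 < k < n -> injective (@circ_row n k).
Proof.
case/andP=> k_gt0 lt_kn a b eq_ab.
have : offset b a < k by rewrite -mem_circ_row -eq_ab mem_circ_row offsetxx.
case: (posnP (offset b a)) => [ba0 _|ba_gt0 ba_lt].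
  by apply: (@offset_inj n b); rewrite offsetxx.
have [x ax] : exists x, offset a x = n.-1 by apply: offset_surj; lia.
have : x \in circ_row k b.
  by rewrite mem_circ_row (offset_add b a x) ax modn_lt_double; [case: ifP; lia | lia].
by rewrite -eq_ab mem_circ_row ax; lia.
Qed.

Lemma circ_row_proper_succ p (a : 'I_p) t : t < p -> circ_row t a \proper circ_row t.+1 a.
Proof.
move=> lt_tp; rewrite properEcard (card_circ_row _ (ltnW lt_tp)) (card_circ_row _ lt_tp).
rewrite ltnSn andbT.
by apply/subsetP => x; rewrite !mem_circ_row => /ltnW.
Qed.

Lemma sum_card_circ_rowD n k (N : {set 'I_n}) :
  k <= n -> \sum_(i < n) #|circ_row k i :\: N| = #|~: N| * k.
Proof.
move=> le_kn; rewrite -sum_nat_const.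
transitivity (\sum_(i < n) \sum_(x in ~: N) (x \in circ_row k i : nat)).
  apply: eq_bigr => i _; rewrite -sum1_card big_mkcond [RHS]big_mkcond /=.
  by apply: eq_bigr => x _; rewrite in_setD in_setC; case: (x \in N); case: (x \in _).
rewrite exchange_big; apply: eq_bigr => x _.
rewrite -[RHS](card_circ_rows_through x le_kn) -sum1_card [RHS]big_mkcond /=.
by apply: eq_bigr => i _; rewrite [i \in _]inE; case: (x \in circ_row k i).
Qed.

Section InjectiveImage.
Variables (aT rT : finType) (f : aT -> rT) (W : {set aT}).
Hypothesis f_inj : {in W &, injective f}.

Lemma mem_imset_in (u : {set aT}) x :
  u \subset W -> x \in W -> (f x \in f @: u) = (x \in u).
Proof.
move=> uW xW; apply/imsetP/idP => [[y yu /f_inj ->] //|xu]; last by exists x.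
exact: (subsetP uW).
Qed.

Lemma imset_subset_in (u v : {set aT}) :
  u \subset W -> v \subset W -> (f @: u \subset f @: v) = (u \subset v).
Proof.
move=> uW vW; apply/idP/idP => [/subsetP fuv|]; last exact: imsetS.
apply/subsetP => x xu; have xW := subsetP uW x xu.
by rewrite -(mem_imset_in vW xW) fuv ?imset_f.
Qed.

Lemma imset_proper_in (u v : {set aT}) :
  u \subset W -> v \subset W -> (f @: u \proper f @: v) = (u \proper v).
Proof. by move=> uW vW; rewrite !properE !imset_subset_in. Qed.

Lemma imset_inj_in (u v : {set aT}) :
  u \subset W -> v \subset W -> f @: u = f @: v -> u = v.
Proof.
move=> uW vW fuv; apply/eqP.
by rewrite eqEsubset -(imset_subset_in uW vW) -(imset_subset_in vW uW) fuv subxx.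
Qed.

End InjectiveImage.

Definition minimal_sets (T : finType) (R : {set {set T}}) : {set {set T}} :=
  [set v in R | [forall u in R, ~~ (u \proper v)]].

Lemma mrows_contract (T : finType) (A : mat01 T) (N : {set T}) :
  mrows (contract A N) = minimal_sets [set v :\: N | v in mrows A].
Proof. by []. Qed.

Lemma minimal_setsP (T : finType) (R : {set {set T}}) v :
  reflect (v \in R /\ {in R, forall u : {set T}, ~~ (u \proper v)}) (v \in minimal_sets R).
Proof. by rewrite inE; apply: (iffP andP) => -[vR /forall_inP]. Qed.

Lemma minimal_sets_sub (T : finType) (R : {set {set T}}) : minimal_sets R \subset R.
Proof. by apply/subsetP => v /minimal_setsP[]. Qed.

Lemma minimal_sets_below (T : finType) (R : {set {set T}}) (v : {set T}) :
  v \in R -> exists2 u, u \in minimal_sets R & u \subset v.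
Proof.
move=> vR; have vP : (v \in R) && (v \subset v) by rewrite vR subxx.
have [u /andP[uR uv] u_min] :=
  @arg_minnP _ v [pred u | (u \in R) && (u \subset v)] (fun u => #|u|) vP.
exists u => //; apply/minimal_setsP; split=> // w wR; apply/negP => wu.
have := u_min w; rewrite /= wR (subset_trans (proper_sub wu) uv) => /(_ isT).
by rewrite leqNgt proper_card.
Qed.

Lemma minimal_sets_imset (T rT : finType) (f : T -> rT) (W : {set T})
    (R : {set {set T}}) :
  {in W &, injective f} -> {in R, forall u : {set T}, u \subset W} ->
  [set f @: (v : {set T}) | v in minimal_sets R] =
  minimal_sets [set f @: (v : {set T}) | v in R].
Proof.
move=> f_inj RW; apply/setP => w; apply/imsetP/minimal_setsP.
  case=> v /minimal_setsP[vR v_min] ->; split; first exact: imset_f.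
  by move=> _ /imsetP[u uR ->]; rewrite (imset_proper_in f_inj (RW u uR) (RW v vR)) v_min.
case=> /imsetP[v vR ->] w_min; exists v => //; apply/minimal_setsP; split=> // u uR.
by rewrite -(imset_proper_in f_inj (RW u uR) (RW v vR)) w_min ?imset_f.
Qed.

Lemma minimal_sets_antichain (T : finType) (F B : {set {set T}}) :
  B \subset F -> {in B &, forall u v : {set T}, ~~ (u \proper v)} ->
  {in F, forall v : {set T}, v \in B \/ exists2 u, u \in B & u \proper v} ->
  minimal_sets F = B.
Proof.
move=> BF B_anti FB; apply/setP => v; apply/minimal_setsP/idP => [[vF v_min]|vB].
  by have [//|[u uB uv]] := FB v vF; rewrite (negbTE (v_min u (subsetP BF u uB))) in uv.
split=> [|w wF]; first exact: subsetP BF v vB.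
apply/negP => wv; have [wB|[u uB uw]] := FB w wF.
  by rewrite (negbTE (B_anti w v wB vB)) in wv.
by have := B_anti u v uB vB; rewrite (proper_trans uw wv).
Qed.

Lemma card_imset_fibers (aT rT : finType) (F : aT -> rT) (g : aT -> nat)
    (A : {set aT}) m :
  {in A &, forall x y, g x = g y -> F x = F y} -> {in A, forall x, g x < m} ->
  #|F @: A| <= m.
Proof.
elim: m A => [|m IHm] A gF g_lt.
  by case: (set_0Vmem A) => [->|[x xA]]; [rewrite imset0 cards0 | have := g_lt x xA].
have -> : A = [set x in A | g x < m] :|: [set x in A | g x == m].
  apply/setP => x; rewrite !inE -andb_orr orbC -leq_eqVlt.
  by symmetry; apply/andb_idr/g_lt.
rewrite imsetU -addn1 (leq_trans (leq_card_setU _ _)) // leq_add //.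
  by apply: IHm => [x y /setIdP[xA _] /setIdP[yA _]|x /setIdP[]]; [exact: gF|].
apply/card_le1_eqP => u v /imsetP[x /setIdP[xA /eqP gx] ->].
case/imsetP=> y /setIdP[yA /eqP gy] ->.
by apply: gF => //; rewrite gx gy.
Qed.

Lemma second_largest (T : finType) (phi : T -> nat) (S : {set T}) :
  injective phi -> 1 < #|S| ->
  exists q y, [/\ q \in S, y \in S, phi q < phi y &
                  #|S| - 2 <= #|[set x in S | phi x < phi q]|].
Proof.
move=> phi_inj S_gt1.
have [x0 x0S] : exists x, x \in S by apply/card_gt0P; lia.
have [y yS y_max] := arg_maxnP phi x0S; have {}yS : y \in S := yS.
have [q0 q0S q0y] : exists2 q, q \in S & q != y.
  have /card_gt1P[z1 [z2 [z1S z2S z12]]] := S_gt1.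
  by case: (eqVneq z1 y) => [<-|]; [exists z2; rewrite // eq_sym | exists z1].
have q0P : (q0 \in S) && (q0 != y) by rewrite q0S q0y.
have [q /andP[qS qy] q_max] := @arg_maxnP _ q0 [pred x | (x \in S) && (x != y)] phi q0P.
have neq_phi x : x != q -> phi x != phi q by apply: contra => /eqP/phi_inj ->.
exists q, y; split=> //.
  by rewrite ltn_neqAle (y_max q qS : phi q <= phi y) andbT eq_sym neq_phi // eq_sym.
have sub : S :\: [set y; q] \subset [set x in S | phi x < phi q].
  apply/subsetP => x; rewrite in_setD in_set2 negb_or => /andP[/andP[xy xq] xS].
  have le_xq : phi x <= phi q by apply: q_max; rewrite /= xS xy.
  by rewrite inE xS ltn_neqAle neq_phi // le_xq.
apply: leq_trans (subset_leq_card sub).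
rewrite cardsD leq_sub2l // (leq_trans (subset_leq_card (subsetIr _ _))) // cards2.
by case: (_ != _).
Qed.

Section CirculantMinorBounds.
Variables (n k n' k' : nat) (N : {set 'I_n}) (f : 'I_n -> 'I_n').
Hypotheses (k_gt0 : 0 < k) (lt_kn : k < n) (k'_gt0 : 0 < k') (lt_k'n' : k' < n').

Let W := [set: 'I_n] :\: N.
Let window i := circ_row k i :\: N.
Let rows := [set v :\: N | v in mrows (circulant n k)].
Let minimal_rows := minimal_sets rows.

Hypotheses (f_inj : {in W &, injective f}) (f_onto : f @: W = [set: 'I_n'])
  (f_rows : [set f @: (v : {set 'I_n}) | v in minimal_rows] =
            [set circ_row k' j | j : 'I_n']).

Lemma rowsP u : reflect (exists i, u = window i) (u \in rows).
Proof.
apply: (iffP imsetP) => [[_ /imsetP[i _ ->] ->]|[i ->]]; first by exists i.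
by exists (circ_row k i); first exact: imset_f.
Qed.

Lemma window_subW i : window i \subset W.
Proof. exact/setSD/subsetT. Qed.

Lemma row_subW u : u \in rows -> u \subset W.
Proof. by case/rowsP=> i ->; apply: window_subW. Qed.

Lemma card_W : #|W| = n'.
Proof. by rewrite -(card_in_imset f_inj) f_onto cardsT card_ord. Qed.

Lemma card_minimal_row u : u \in minimal_rows -> #|u| = k'.
Proof.
move=> u_min; have uW := row_subW (subsetP (minimal_sets_sub _) u u_min).
have : f @: u \in [set circ_row k' j | j : 'I_n'] by rewrite -f_rows imset_f.
case/imsetP=> j _ fu; rewrite -(card_circ_row j (ltnW lt_k'n')) -fu card_in_imset //.
by move=> x y xu yu; apply: f_inj; apply: (subsetP uW).
Qed.

Lemma card_minimal_rows : #|minimal_rows| = n'.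
Proof.
have fW u : u \in minimal_rows -> u \subset W.
  by move=> u_min; apply/row_subW/(subsetP (minimal_sets_sub _)).
have f_rows_inj : {in minimal_rows &, injective (fun u : {set 'I_n} => f @: u)}.
  by move=> u v u_min v_min; apply: (imset_inj_in f_inj (fW u u_min) (fW v v_min)).
rewrite -(card_in_imset f_rows_inj) f_rows card_imset ?card_ord //.
by apply: circ_row_inj; rewrite k'_gt0.
Qed.

Lemma card_minimal_rows_through q :
  q \in W -> k' <= #|[set u in minimal_rows | q \in u]|.
Proof.
move=> qW; set Q := [set u in minimal_rows | q \in u].
have sub : [set circ_row k' j | j in [set j | f q \in circ_row k' j]] \subset
           [set f @: (u : {set 'I_n}) | u in Q].
  apply/subsetP => w /imsetP[j]; rewrite inE => fqj ->.
  have : circ_row k' j \in [set f @: (u : {set 'I_n}) | u in minimal_rows].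
    by rewrite f_rows imset_f.
  case/imsetP=> u u_min fu; apply/imsetP; exists u => //.
  have uW := row_subW (subsetP (minimal_sets_sub _) u u_min).
  by rewrite inE u_min -(mem_imset_in f_inj uW qW) -fu.
have := subset_leq_card sub; rewrite card_imset; last by apply: circ_row_inj; rewrite k'_gt0.
rewrite card_circ_rows_through ?(ltnW lt_k'n') // => /leq_trans; apply.
exact: leq_imset_card.
Qed.

Lemma leq_card_window i : k' <= #|window i|.
Proof.
have [|u u_min u_sub] := @minimal_sets_below _ rows (window i); first by apply/rowsP; exists i.
by rewrite -(card_minimal_row u_min) subset_leq_card.
Qed.

(* [around q t] is the window starting [t] columns before [q]: [after q t]
   holds [q] and the columns following it, [before q t] those preceding it. *)
Let before q t := [set x in W | n - t <= offset q x].
Let after q t := [set x in W | offset q x < k - t].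
Let around q t := after q t :|: before q t.

Lemma window_around j q : offset j q < k -> window j = around q (offset j q).
Proof.
move=> jq; apply/setP => x.
rewrite /window /around in_setD mem_circ_row (offset_lt_through _ jq) !inE.
by case: (x \in N); rewrite ?andbF.
Qed.

Lemma card_around q t : #|around q t| = #|after q t| + #|before q t|.
Proof.
rewrite cardsU; suff /eqP-> : after q t :&: before q t == set0 by rewrite cards0 subn0.
by rewrite -subset0; apply/subsetP => x; rewrite !inE; lia.
Qed.

Lemma before_mono q t1 t2 : t1 <= t2 -> before q t1 \subset before q t2.
Proof. by move=> le_t; apply/subsetP => x; rewrite !inE => /andP[-> ?]; lia. Qed.

Lemma after_anti q t1 t2 : t1 <= t2 -> after q t2 \subset after q t1.
Proof. by move=> le_t; apply/subsetP => x; rewrite !inE => /andP[-> ?]; lia. Qed.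

Lemma around_eq q t1 t2 : t1 <= t2 ->
  #|before q t1| = #|before q t2| -> #|around q t1| = #|around q t2| ->
  around q t1 = around q t2.
Proof.
move=> le_t eq_before eq_around.
have eqB : before q t1 = before q t2 by apply/eqP; rewrite eqEcard before_mono ?eq_before /=.
have eqA : after q t2 = after q t1.
  apply/eqP; rewrite eqEcard after_anti //= -(leq_add2r #|before q t1|).
  by rewrite -card_around eq_before -card_around eq_around.
by rewrite /around eqB eqA.
Qed.

Lemma mem_after q t : q \in W -> t < k -> q \in after q t.
Proof. by move=> qW lt_tk; rewrite inE qW offsetxx subn_gt0. Qed.

(* The k' rows of the minor through [q] are of the form [around q t], have size
   k', and are determined by [#|before q t| < k'] (around_eq): every such value
   occurs. *)
Lemma minimal_row_ending_at q : q \in W ->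
  exists t, [/\ t < k, around q t \in minimal_rows & #|before q t| = k'.-1].
Proof.
move=> qW; pose Tq := [set t : 'I_k | around q t \in minimal_rows].
have card_Tq t : t \in Tq -> #|around q t| = k' by rewrite inE => /card_minimal_row.
have before_lt t : t \in Tq -> #|before q t| < k'.
  move=> tT; rewrite -(card_Tq t tT) card_around -[X in X < _]add0n ltn_add2r.
  by apply/card_gt0P; exists q; apply: mem_after.
have rows_through :
    [set u in minimal_rows | q \in u] \subset [set around q t | t : 'I_k in Tq].
  apply/subsetP => u /setIdP[u_min qu].
  have /rowsP[j uj] := subsetP (minimal_sets_sub _) u u_min.
  have jq : offset j q < k by move: qu; rewrite uj in_setD mem_circ_row => /andP[].
  apply/imsetP; exists (Ordinal jq); last by rewrite uj (window_around jq).
  by rewrite inE /= -(window_around jq) -uj.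
case: (boolP [exists t in Tq, #|before q t| == k'.-1]) => [/exists_inP[t tT /eqP bt]|].
  by exists t; split; [exact: ltn_ord | rewrite inE in tT | ].
move/exists_inPn => no_end; exfalso.
suff : k' <= k'.-1 by lia.
apply: leq_trans (card_minimal_rows_through qW) _.
apply: leq_trans (subset_leq_card rows_through) _.
apply: (card_imset_fibers (g := fun t : 'I_k => #|before q t|)) => [t1 t2 t1T t2T|t tT].
  wlog le_t : t1 t2 t1T t2T / t1 <= t2 => [hwlog eq_b|eq_b].
    by case: (leqP t1 t2) => [|/ltnW] le_t; last symmetry; apply: hwlog.
  by apply: around_eq => //; rewrite !card_Tq.
by have := before_lt t tT; have := no_end t tT; lia.
Qed.

Lemma card_window_le i : #|window i| <= k'.+1.
Proof.
rewrite leqNgt; apply/negP => big.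
have [|q [y [qS yS lt_qy below_q]]] := second_largest (@offset_inj n i) (_ : 1 < #|window i|).
  by lia.
have [qW yW] : q \in W /\ y \in W by split; apply: (subsetP (window_subW i)).
have [lt_qk lt_yk] : offset i q < k /\ offset i y < k.
  by move: qS yS; rewrite !in_setD !mem_circ_row => /andP[_ ->] /andP[_ ->].
have before_q : k' <= #|before q (offset i q)|.
  have sub : [set x in window i | offset i x < offset i q] \subset before q (offset i q).
    apply/subsetP => x /setIdP[xS].
    by rewrite inE (subsetP (window_subW i) x xS) offset_lt_offset.
  apply: (leq_trans _ (subset_leq_card sub)); apply: (leq_trans _ below_q).
  (* [set] merges two syntactically different forms of this cardinal for [lia]. *)
  by set c := #|window i| in big *; lia.
have [t [lt_tk t_min before_t]] := minimal_row_ending_at qW.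
have lt_t : t < offset i q.
  rewrite ltnNge; apply/negP => /(before_mono q) /subset_leq_card.
  by rewrite before_t; lia.
have after_t : [set q; y] \subset after q t.
  apply/subsetP => x /set2P[] ->; first exact: mem_after.
  have lt_qyn : offset q y < n - offset i q.
    by rewrite ltnNge -offset_lt_offset -leqNgt ltnW.
  have := offset_add i q y; rewrite modn_small; last lia.
  by rewrite inE yW /=; lia.
have qy : q != y by apply: contraTneq lt_qy => ->; rewrite ltnn.
have := subset_leq_card after_t; rewrite cards2 qy.
have := card_minimal_row t_min; rewrite card_around before_t.
by set a := #|after q t|; lia.
Qed.

Lemma circulant_minor_card_bounds : n * k' <= n' * k /\ n' * k + n' <= n * k'.+1.
Proof.
have sum_window : \sum_(i < n) #|window i| = n' * k.
  by rewrite sum_card_circ_rowD ?(ltnW lt_kn) // -setTD card_W.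
pose T := [set i | window i \in minimal_rows].
have card_T : n' <= #|T|.
  have sub : minimal_rows \subset [set window i | i in T].
    apply/subsetP => u u_min; have /rowsP[i ui] := subsetP (minimal_sets_sub _) u u_min.
    by apply/imsetP; exists i; rewrite // inE -ui.
  by rewrite -card_minimal_rows (leq_trans (subset_leq_card sub)) ?leq_imset_card.
have sum_T : \sum_(i < n) (i \in T : nat) = #|T|.
  by rewrite -sum1_card [RHS]big_mkcond; apply: eq_bigr => i _; case: (i \in T).
split.
  have : \sum_(i < n) k' <= \sum_(i < n) #|window i|.
    by apply: leq_sum => i _; apply: leq_card_window.
  by rewrite sum_window sum_nat_const card_ord mulnC.
have : \sum_(i < n) (#|window i| + (i \in T)) <= \sum_(i < n) k'.+1.
  apply: leq_sum => i _; case: (boolP (i \in T)) => [|_]; last by rewrite addn0 card_window_le.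
  by rewrite inE => /card_minimal_row ->; rewrite addn1.
rewrite big_split /= sum_window sum_T sum_nat_const card_ord.
by move: card_T; lia.
Qed.

End CirculantMinorBounds.

Lemma circulant_minor_bounds n k n' k' : 0 < k < n -> 0 < k' < n' ->
  has_minor (circulant n k) (circulant n' k') ->
  n * k' <= n' * k /\ n' * k + n' <= n * k'.+1.
Proof.
move=> /andP[k_gt0 lt_kn] /andP[k'_gt0 lt_k'n'] [N [_ [f [f_inj [f_onto f_rows]]]]].
exact: circulant_minor_card_bounds f_inj f_onto f_rows.
Qed.

Section StretchedCirculant.
Variables h k' r : nat.
Hypotheses (r_gt0 : 0 < r) (lt_rh : r < h).
Local Notation m := (h * k' + r).
Local Notation n := (h * m).

Let h_gt0 : 0 < h. Proof. lia. Qed.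
Let m_gt0 : 0 < m. Proof. lia. Qed.

Lemma stretch_lt (j : 'I_m) : h * j < n.
Proof. by rewrite ltn_pmul2l. Qed.

Lemma shrink_lt (x : 'I_n) : x %/ h < m.
Proof. by rewrite ltn_divLR //; apply: leq_trans (ltn_ord x) _; rewrite mulnC. Qed.

Definition stretch (j : 'I_m) : 'I_n := Ordinal (stretch_lt j).
Definition shrink (x : 'I_n) : 'I_m := Ordinal (shrink_lt x).

Lemma stretchK : cancel stretch shrink.
Proof. by move=> j; apply: val_inj; rewrite /= mulKn. Qed.

Lemma shrinkK (x : 'I_n) : h %| x -> stretch (shrink x) = x.
Proof. by move=> dvd_hx; apply: val_inj; rewrite /= mulnC divnK. Qed.

Lemma offset_stretch a j : offset (stretch a) (stretch j) = h * offset a j.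
Proof.
rewrite !offsetE /= ltn_pmul2l //; case: ifP => _; last by rewrite mulnBr.
by rewrite mulnBr [h * (j + _)]mulnDr.
Qed.

Lemma exists_stretch_near (i : 'I_n) : exists a, offset i (stretch a) < h.
Proof.
pose b := (i + h.-1) %/ h.
have [c lt_ch eq_div] : exists2 c, c < h & i + h.-1 = h * b + c.
  by exists ((i + h.-1) %% h); rewrite ?ltn_pmod // [h * b]mulnC; apply: divn_eq.
have lt_in := ltn_ord i; clearbody b.
have le_bm : b <= m by rewrite -ltnS -(ltn_pmul2l h_gt0) mulnS; lia.
exists (Ordinal (ltn_pmod b m_gt0)); rewrite offsetE /=.
case: (ltnP b m) => [lt_bm | ge_bm].
  by rewrite modn_small //; case: ifP => [?|_]; [exfalso|]; lia.
have eq_bm : b = m by lia.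
by rewrite eq_bm modnn muln0; case: ifP; lia.
Qed.

Lemma stretch_window (i : 'I_n) a : offset i (stretch a) < h ->
  [set j | stretch j \in circ_row m i] = circ_row (k' + (offset i (stretch a) < r)) a.
Proof.
move=> near; apply/setP => j; rewrite [j \in [set _ | _]]inE !mem_circ_row.
rewrite (offset_add i (stretch a)) offset_stretch.
have lt_am := offset_lt a j.
set e := offset i (stretch a) in near *; set d := offset a j in lt_am *.
rewrite modn_small; last by nia.
by case: (ltnP e r) => e_r /=; apply/idP/idP => ?; nia.
Qed.

Lemma stretched_circulant_minor : has_minor (circulant n m) (circulant m k').
Proof.
pose N := [set x : 'I_n | ~~ (h %| x)].
have memW x : (x \in [set: 'I_n] :\: N) = (h %| x) by rewrite !inE negbK andbT.
have shrink_inj : {in [set: 'I_n] :\: N &, injective shrink}.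
  by move=> x y; rewrite !memW => hx hy e; rewrite -(shrinkK hx) -(shrinkK hy) e.
have shrink_row i : shrink @: (circ_row m i :\: N) = [set j | stretch j \in circ_row m i].
  apply/setP => j; rewrite inE; apply/imsetP/idP => [[x /setDP[xi]]|ji].
    by rewrite inE negbK => /shrinkK xE ->; rewrite xE.
  by exists (stretch j); rewrite ?stretchK // in_setD ji inE negbK dvdn_mulr.
exists N; split; first exact: subsetT.
exists shrink; split; [exact: shrink_inj | split].
  apply/setP => j; rewrite inE; apply/imsetP; exists (stretch j); last by rewrite stretchK.
  by rewrite memW dvdn_mulr.
rewrite mrows_contract (minimal_sets_imset shrink_inj); last first.
  by move=> _ /imsetP[_ /imsetP[i _ ->] ->]; apply/setSD/subsetT.
have le_k'm : k' < m by nia.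
apply: minimal_sets_antichain.
- apply/subsetP => _ /imsetP[a _ ->].
  have [i near] : exists i, offset i (stretch a) = h.-1 by apply: offset_surj_l; nia.
  have near_h : offset i (stretch a) < h by rewrite near; lia.
  have := stretch_window near_h.
  rewrite near ltnNge (_ : r <= h.-1) ?addn0 => [<-|]; last lia.
  by rewrite -shrink_row; do 3 apply: imset_f.
- move=> _ _ /imsetP[a _ ->] /imsetP[b _ ->]; apply/negP => /proper_card.
  by rewrite !card_circ_row ?ltnn // ltnW.
- move=> _ /imsetP[_ /imsetP[_ /imsetP[i _ ->] ->] ->].
  have [a near] := exists_stretch_near i; rewrite shrink_row (stretch_window near).
  case: (_ < r); [right; exists (circ_row k' a) | left]; rewrite ?addn0 ?imset_f //.
  by rewrite addn1 circ_row_proper_succ.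
Qed.

End StretchedCirculant.

Lemma r_lt_h_of_minor_bounds s k k' h r : 0 < k -> 0 < r < k' ->
  s * k * k' <= (h * k' + r) * k ->
  (h * k' + r) * k + (h * k' + r) <= s * k * k'.+1 -> r < h.
Proof.
move=> k_gt0 /andP[r_gt0 lt_rk'] le_kk' le_k'k.
have le_sh : s <= h.
  have : s * k' <= h * k' + r by rewrite -(leq_pmul2r k_gt0) mulnAC.
  by nia.
have le_hk : s * k * k'.+1 <= h * k * k'.+1 by rewrite !leq_mul2r le_sh !orbT.
rewrite ltnNge; apply/negP => le_hr.
have : h * k <= r * k by rewrite leq_mul2r le_hr orbT.
nia.
Qed.

Theorem mainTheorem3 (k' h r : nat) :
  (2 <= k')%N -> (1 <= h)%N -> (1 <= r <= k' - 1)%N ->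
  (exists s k : nat, [/\ (0 < s)%N, (0 < k)%N, (k <= s * k - 1)%N &
      has_minor (circulant (s * k) k) (circulant (h * k' + r) k')])
  <-> (r <= h - 1)%N.
Proof.
move=> le_2k' h_gt0 /andP[r_gt0 le_rk']; split.
  case=> s [k [_ k_gt0 lt_k_sk minor]].
  have k_bounds : 0 < k < s * k by rewrite k_gt0; lia.
  have k'_bounds : 0 < k' < h * k' + r by nia.
  have [le_kk' le_k'k] := circulant_minor_bounds k_bounds k'_bounds minor.
  by have := r_lt_h_of_minor_bounds k_gt0 (_ : 0 < r < k') le_kk' le_k'k; lia.
move=> le_rh; exists h, (h * k' + r); split; [lia | lia | nia |].
by apply: stretched_circulant_minor; lia.
Qed.
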